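(* Let $a$ and $b$ be relatively prime integers with $1<a<b$, let $(u,v)$ be the definitely least solution of $ax+by=1$, and let $S=\langle a,b\rangle$. Then $\min I(S)=F(S)-(|u|-1)a-(|v|-1)b$.
   Context: $\langle a,b\rangle=\{\lambda_1a+\lambda_2b:\lambda_1,\lambda_2\in\mathbb{N}\}$, with $\mathbb{N}$ the nonnegative integers. $F(S)$ is the Frobenius number of $S$, the largest integer not in $S$. An isolated gap of $S$ is an element $x\in\mathbb{N}\setminus S$ with $x-1,x+1\in S$; $I(S)$ is the set of isolated gaps. The definitely least solution $(u,v)$ of $ax+by=1$ is the unique integer solution with both $|u|$ and $|v|$ minimal; equivalently the solution with $|u|\le b/2$, $|v|\le a/2$. *)

From mathcomp Require Import all_boot all_order all_algebra.
Import Order.TTheory GRing.Theory Num.Theory.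
Local Open Scope ring_scope.

Definition in_numsg (a b : int) (x : int) : Prop :=
  exists l1 l2 : nat, x = l1%:Z * a + l2%:Z * b.

Definition is_frobenius (S : int -> Prop) (f : int) : Prop :=
  ~ S f /\ (forall x : int, f < x -> S x).

Definition isolated_gap (S : int -> Prop) (x : int) : Prop :=
  0 <= x /\ ~ S x /\ S (x - 1) /\ S (x + 1).

Definition is_min (P : int -> Prop) (m : int) : Prop :=
  P m /\ (forall x : int, P x -> m <= x).

Definition definitely_least (a b u v : int) : Prop :=
  a * u + b * v = 1 /\ 2 * `|u| <= b /\ 2 * `|v| <= a.

(** For coprime a, b every integer has a unique standard form x = i a + j b
    with 0 <= j < a, and x lies in <a,b> exactly when i >= 0.  Write the
    Bezout relation as a u - b w = 1 with u, w > 0.  A gap x = i a + j b has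
    i < 0; its neighbours are x - 1 = (i - u) a + (j + w) b and
    x + 1 = (i + u) a + (j - w) b, so both lie in <a,b> only if j >= a - w
    and i >= -u, which gives x >= a b - u a - w b.  Conversely that value is
    a gap whose neighbours (b - 2u) a and (a - 2w) b lie in <a,b> precisely
    because (u, -w) is the definitely least solution.  Since
    F = a b - a - b, this is F - (u - 1) a - (w - 1) b.  When instead u < 0,
    the same argument applies with the roles of a and b exchanged. *)

From mathcomp Require Import all_boot all_order all_algebra zify ring.
Import Order.TTheory GRing.Theory Num.Theory.
Local Open Scope ring_scope.

Lemma in_numsg_nonneg (a b i j : int) :
  0 <= i -> 0 <= j -> in_numsg a b (i * a + j * b).
Proof. by move=> i_ge0 j_ge0; exists `|i|%N, `|j|%N; rewrite !gez0_abs. Qed.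

Lemma in_numsgC (a b x : int) : in_numsg a b x <-> in_numsg b a x.
Proof. by split=> -[l1 [l2 ->]]; exists l2, l1; rewrite addrC. Qed.

Lemma isolated_gap_numsgC (a b x : int) :
  isolated_gap (in_numsg a b) x <-> isolated_gap (in_numsg b a) x.
Proof. by rewrite /isolated_gap !(in_numsgC a b). Qed.

Lemma is_min_ext (P Q : int -> Prop) (m : int) :
  (forall x, P x <-> Q x) -> is_min P m -> is_min Q m.
Proof. by move=> PQ [/PQ Pm m_min]; split=> // x /PQ; apply: m_min. Qed.

Lemma frobenius_unique (S : int -> Prop) (f g : int) :
  is_frobenius S f -> is_frobenius S g -> f = g.
Proof.
move=> [Sf_not Sf_gt] [Sg_not Sg_gt].
by case: (ltrgtP f g) => // [/Sf_gt | /Sg_gt].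
Qed.

Section StandardForm.

Variables a b : int.
Hypotheses (a_gt0 : 0 < a) (b_gt0 : 0 < b) (coprime_ab : coprimez a b).

Lemma numsg_standard_form (x : int) :
  exists i j, x = i * a + j * b /\ 0 <= j < a.
Proof.
have [[u v] /= bezout] := coprimezP _ _ coprime_ab.
exists (x * u + ((x * v) %/ a)%Z * b), ((x * v) %% a)%Z; split.
  have xE : x = (x * u) * a + (x * v) * b by rewrite -[LHS]mulr1 -bezout; ring.
  by rewrite {1}xE {1}(divz_eq (x * v) a); ring.
by rewrite modz_ge0 ?ltz_pmod ?gt_eqF.
Qed.

Lemma in_numsg_standardE (i j : int) :
  0 <= j < a -> in_numsg a b (i * a + j * b) <-> 0 <= i.
Proof.
move=> /andP[j_ge0 j_lta].
split=> [[l1 [l2 E]] | i_ge0]; last exact: in_numsg_nonneg.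
have : (a %| (l2%:Z - j) * b)%Z.
  by apply/dvdzP; exists (i - l1%:Z); lia.
rewrite Gauss_dvdzl // => /dvdzP[k l2E].
have k_ge0 : 0 <= k by nia.
have : (i - l1%:Z) * a = (k * b) * a by nia.
move/(mulIf (lt0r_neq0 a_gt0)) => iE.
have : 0 <= k * b by rewrite mulr_ge0 // ltW.
lia.
Qed.

Lemma is_frobenius_numsg : is_frobenius (in_numsg a b) (a * b - a - b).
Proof.
split.
  rewrite (_ : _ - _ - _ = (-1) * a + (a - 1) * b); last by ring.
  by rewrite in_numsg_standardE //; lia.
move=> x; have [i [j [-> /andP[j_ge0 j_lta]]]] := numsg_standard_form x => x_gt.
apply/in_numsg_standardE; first by rewrite j_ge0.
have : j * b <= (a - 1) * b by rewrite ler_pM2r //; lia.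
nia.
Qed.

End StandardForm.

Section MinIsolatedGap.

Variables a b u w : int.
Hypotheses (bezout : a * u - b * w = 1) (u_gt0 : 0 < u) (w_gt0 : 0 < w).
Hypotheses (u_small : 2 * u <= b) (w_small : 2 * w <= a).

Let a_gt0 : 0 < a. Proof. lia. Qed.
Let b_gt0 : 0 < b. Proof. lia. Qed.
Let coprime_ab : coprimez a b.
Proof. by apply/coprimezP; exists (u, - w) => /=; lia. Qed.

Let in_numsgE := in_numsg_standardE a b a_gt0 b_gt0 coprime_ab.

Lemma isolated_gap_numsg : isolated_gap (in_numsg a b) (a * b - u * a - w * b).
Proof.
split; first by nia.
split.
  rewrite (_ : _ - _ - _ = (- u) * a + (a - w) * b); last by ring.
  by rewrite in_numsgE; lia.
split.
  rewrite (_ : _ - 1 = (b - 2 * u) * a + 0 * b); last by lia.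
  by apply: in_numsg_nonneg; lia.
rewrite (_ : _ + 1 = 0 * a + (a - 2 * w) * b); last by lia.
by apply: in_numsg_nonneg; lia.
Qed.

Lemma isolated_gap_numsg_ge (x : int) :
  isolated_gap (in_numsg a b) x -> a * b - u * a - w * b <= x.
Proof.
move=> [_ [x_notin [xB1_in xD1_in]]].
have [i [j [xE /andP[j_ge0 j_lta]]]] :=
  numsg_standard_form a b a_gt0 coprime_ab x.
have i_lt0 : i < 0.
  rewrite ltNge; apply/negP => i_ge0; apply: x_notin.
  by rewrite xE; apply: in_numsg_nonneg.
have j_ge : a <= j + w.
  rewrite leNgt; apply/negP => j_lt; move: xB1_in.
  by rewrite (_ : x - 1 = (i - u) * a + (j + w) * b) ?in_numsgE; lia.
have w_le_j : w <= j.
  rewrite leNgt; apply/negP => j_lt; move: xD1_in.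
  by rewrite (_ : x + 1 = (i + u - b) * a + (j - w + a) * b) ?in_numsgE; lia.
have iu_ge0 : 0 <= i + u.
  move: xD1_in.
  by rewrite (_ : x + 1 = (i + u) * a + (j - w) * b) ?in_numsgE; lia.
nia.
Qed.

Lemma min_isolated_gap_numsg :
  is_min (isolated_gap (in_numsg a b)) (a * b - u * a - w * b).
Proof.
by split; [apply: isolated_gap_numsg | apply: isolated_gap_numsg_ge].
Qed.

End MinIsolatedGap.

Lemma bezout_opposite_signs {a b u v : int} :
  1 < a -> 1 < b -> a * u + b * v = 1 -> (0 < u /\ v < 0) \/ (u < 0 /\ 0 < v).
Proof.
move=> a_gt1 b_gt1 bezout; case: (ltrgtP u 0) => u_sign.
- by right; split=> //; nia.
- by left; split=> //; nia.
- move: bezout; rewrite u_sign mulr0 add0r => bv1.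
  by case: (lerP v 0) => v_sign; nia.
Qed.

Theorem proposition4p9 (a b u v F : int) :
  1 < a -> a < b -> coprimez a b ->
  definitely_least a b u v ->
  is_frobenius (in_numsg a b) F ->
  is_min (isolated_gap (in_numsg a b))
         (F - (`|u| - 1) * a - (`|v| - 1) * b).
Proof.
move=> a_gt1 a_ltb coprime_ab [bezout [u_small v_small]] frobF.
have b_gt1 : 1 < b by lia.
have -> : F = a * b - a - b.
  by apply: frobenius_unique frobF _; apply: is_frobenius_numsg => //; lia.
case: (bezout_opposite_signs a_gt1 b_gt1 bezout) => -[u_sign v_sign].
- rewrite gtr0_norm // ltr0_norm //.
  rewrite (_ : _ - _ - _ = a * b - u * a - (- v) * b); last by ring.
  by apply: min_isolated_gap_numsg; lia.
- rewrite ltr0_norm // gtr0_norm //.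
  rewrite (_ : _ - _ - _ = b * a - v * b - (- u) * a); last by ring.
  apply: is_min_ext (isolated_gap_numsgC b a) _.
  by apply: min_isolated_gap_numsg; lia.
Qed.
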